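(* Let $(\mathcal K,[\cdot,\cdot])$ be a Krein space and let $T$ be a closed, densely defined linear operator in $\mathcal K$ such that $\rho(T^{[*]}T)\neq\emptyset$ and $\rho(TT^{[*]})\neq\emptyset$. Then $$\sigma(T^{[*]}T)\setminus\{0\}=\sigma(TT^{[*]})\setminus\{0\},$$ and there exists a constant $C>0$ depending only on $T$ such that for all $\lambda,\mu\in\rho(T^{[*]}T)$ with $\lambda\neq0$, $$\|(T^{[*]}T-\lambda)^{-1}\|\le\frac{C\,M_1(\lambda)M_2(\mu)}{|\lambda|}\Big(|\mu|+|\lambda-\mu|\,(2+|\lambda|)(2+|\mu|)\Big),$$ where $M_1(\lambda):=\max\{1,\|(TT^{[*]}-\lambda)^{-1}\|\}$ and $M_2(\mu):=\max\{1,\|(T^{[*]}T-\mu)^{-1}\|\}$.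
   Context: $\mathcal K$ is equipped with a Banach norm $\|\cdot\|$ for which $[\cdot,\cdot]$ is continuous. $T^{[*]}$ is the Krein space adjoint of $T$; products have natural domains. For an operator $S$ in $\mathcal K$, $\rho(S)$ is the set of $\lambda\in\mathbb C$ with $S-\lambda:\operatorname{dom}S\to\mathcal K$ bijective and $(S-\lambda)^{-1}$ bounded; $\sigma(S)=\mathbb C\setminus\rho(S)$. *)

From Stdlib Require Import Reals ClassicalEpsilon.
Open Scope R_scope.

Record Cx := mkCx { Re : R; Im : R }.
Definition C0 : Cx := mkCx 0 0.
Definition C1 : Cx := mkCx 1 0.
Definition Cadd (a b : Cx) : Cx := mkCx (Re a + Re b) (Im a + Im b).
Definition Copp (a : Cx) : Cx := mkCx (- Re a) (- Im a).
Definition Csub (a b : Cx) : Cx := Cadd a (Copp b).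
Definition Cmul (a b : Cx) : Cx :=
  mkCx (Re a * Re b - Im a * Im b) (Re a * Im b + Im a * Re b).
Definition Cconj (a : Cx) : Cx := mkCx (Re a) (- Im a).
Definition Cabs (a : Cx) : R := sqrt (Re a ^ 2 + Im a ^ 2).

Definition cauchy_wrt {T} (d : T -> T -> R) (u : nat -> T) : Prop :=
  forall eps, 0 < eps -> exists N, forall n m, (N <= n)%nat -> (N <= m)%nat ->
    d (u n) (u m) < eps.
Definition conv_wrt {T} (d : T -> T -> R) (u : nat -> T) (l : T) : Prop :=
  forall eps, 0 < eps -> exists N, forall n, (N <= n)%nat -> d (u n) l < eps.

Definition is_subspace {T} (add : T -> T -> T) (zero : T) (scal : Cx -> T -> T)
  (P : T -> Prop) : Prop :=
  P zero /\ (forall x y, P x -> P y -> P (add x y)) /\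
  (forall a x, P x -> P (scal a x)).

(** * Krein spaces: a complex vector space with a hermitian sesquilinear form
    admitting a fundamental decomposition K = K+ [+] K- into a Hilbert space
    (K+, [.,.]) and an anti-Hilbert space (K-, -[.,.]); equipped moreover
    with a Banach norm for which [.,.] is continuous. *)
Record KreinSpace := {
  car :> Type;
  kadd : car -> car -> car;
  kzero : car;
  kopp : car -> car;
  kscal : Cx -> car -> car;
  kadd_assoc : forall x y z, kadd x (kadd y z) = kadd (kadd x y) z;
  kadd_comm : forall x y, kadd x y = kadd y x;
  kadd_0 : forall x, kadd x kzero = x;
  kadd_opp : forall x, kadd x (kopp x) = kzero;
  kscal_1 : forall x, kscal C1 x = x;
  kscal_mul : forall a b x, kscal a (kscal b x) = kscal (Cmul a b) x;
  kscal_addv : forall a x y, kscal a (kadd x y) = kadd (kscal a x) (kscal a y);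
  kscal_adds : forall a b x, kscal (Cadd a b) x = kadd (kscal a x) (kscal b x);
  form : car -> car -> Cx;
  form_add_l : forall x y z, form (kadd x y) z = Cadd (form x z) (form y z);
  form_scal_l : forall a x y, form (kscal a x) y = Cmul a (form x y);
  form_herm : forall x y, form y x = Cconj (form x y);
  knorm : car -> R;
  knorm_def : forall x, knorm x = 0 -> x = kzero;
  knorm_scal : forall a x, knorm (kscal a x) = Cabs a * knorm x;
  knorm_triangle : forall x y, knorm (kadd x y) <= knorm x + knorm y;
  knorm_complete : forall u : nat -> car,
    cauchy_wrt (fun x y => knorm (kadd x (kopp y))) u ->
    exists l, conv_wrt (fun x y => knorm (kadd x (kopp y))) u l;
  form_continuous : exists M, forall x y, Cabs (form x y) <= M * knorm x * knorm y;
  fundamental_decomposition :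
    exists Kp Km : car -> Prop,
      is_subspace kadd kzero kscal Kp /\ is_subspace kadd kzero kscal Km /\
      (forall x, exists xp xm, Kp xp /\ Km xm /\ x = kadd xp xm) /\
      (forall x, Kp x -> Km x -> x = kzero) /\
      (forall x y, Kp x -> Km y -> form x y = C0) /\
      (forall x, Kp x -> x <> kzero -> 0 < Re (form x x)) /\
      (forall x, Km x -> x <> kzero -> Re (form x x) < 0) /\
      (forall u : nat -> car, (forall n, Kp (u n)) ->
         cauchy_wrt (fun x y => sqrt (Re (form (kadd x (kopp y)) (kadd x (kopp y))))) u ->
         exists l, Kp l /\
           conv_wrt (fun x y => sqrt (Re (form (kadd x (kopp y)) (kadd x (kopp y))))) u l) /\
      (forall u : nat -> car, (forall n, Km (u n)) ->
         cauchy_wrt (fun x y => sqrt (- Re (form (kadd x (kopp y)) (kadd x (kopp y))))) u ->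
         exists l, Km l /\
           conv_wrt (fun x y => sqrt (- Re (form (kadd x (kopp y)) (kadd x (kopp y))))) u l)
}.

Arguments kadd {k}. Arguments kzero {k}. Arguments kopp {k}. Arguments kscal {k}.
Arguments form {k}. Arguments knorm {k}.

Definition kdist {K : KreinSpace} (x y : K) : R := knorm (kadd x (kopp y)).

(** * (Possibly unbounded) operators in K: a domain and an action on it.
    Values outside the domain are irrelevant. *)
Record Op (K : KreinSpace) := mkOp { dom : K -> Prop; app : K -> K }.
Arguments mkOp {K}. Arguments dom {K}. Arguments app {K}.

Definition linear_op {K : KreinSpace} (T : Op K) : Prop :=
  is_subspace kadd kzero kscal (dom T) /\
  (forall x y, dom T x -> dom T y -> app T (kadd x y) = kadd (app T x) (app T y)) /\
  (forall a x, dom T x -> app T (kscal a x) = kscal a (app T x)).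

Definition closed_op {K : KreinSpace} (T : Op K) : Prop :=
  forall (u : nat -> K) (x y : K), (forall n, dom T (u n)) ->
    conv_wrt kdist u x -> conv_wrt kdist (fun n => app T (u n)) y ->
    dom T x /\ app T x = y.

Definition densely_defined {K : KreinSpace} (T : Op K) : Prop :=
  forall x eps, 0 < eps -> exists y, dom T y /\ kdist x y < eps.

Definition kadj {K : KreinSpace} (T : Op K) : Op K :=
  mkOp (fun y => exists z, forall x, dom T x -> form (app T x) y = form x z)
       (fun y => epsilon (inhabits (@kzero K))
                   (fun z => forall x, dom T x -> form (app T x) y = form x z)).

Definition opmul {K : KreinSpace} (A B : Op K) : Op K :=
  mkOp (fun x => dom B x /\ dom A (app B x)) (fun x => app A (app B x)).

Definition shift_app {K : KreinSpace} (S : Op K) (l : Cx) (x : K) : K :=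
  kadd (app S x) (kopp (kscal l x)).

Definition in_resolvent {K : KreinSpace} (S : Op K) (l : Cx) : Prop :=
  (forall y, exists! x, dom S x /\ shift_app S l x = y) /\
  (exists M, forall x, dom S x -> knorm x <= M * knorm (shift_app S l x)).

Definition in_spectrum {K : KreinSpace} (S : Op K) (l : Cx) : Prop :=
  ~ in_resolvent S l.

Definition sup_of (P : R -> Prop) : R := epsilon (inhabits 0) (fun s => is_lub P s).

(** ||(S - lambda)^{-1}|| = sup { ||x|| : x in dom S, ||(S - lambda) x|| <= 1 } *)
Definition resnorm {K : KreinSpace} (S : Op K) (l : Cx) : R :=
  sup_of (fun r => exists x, dom S x /\ knorm (shift_app S l x) <= 1 /\ r = knorm x).

From Pilot Require Import Defs.
From Stdlib Require Import Reals Lra Lia Psatz ClassicalEpsilon Classical.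
Open Scope R_scope.

(* Let [{A, B} = {T, T^[*]}] and [l <> 0]. If [(BA - l)^{-1}] exists, then
   [w |-> l^{-1} (A (BA - l)^{-1} B w - w)] inverts [AB - l] on [dom (AB)], and composing it
   with some [(AB - nu)^{-1}] inverts [AB - l] on all of [K]. The operators
   [T (T^[*]T - nu)^{-1}] and [T^[*] (TT^[*] - nu)^{-1}] are closed and everywhere defined,
   hence bounded by the closed graph theorem (Baire). Together with the resolvent identity
   [(P - l)^{-1} = (P - m)^{-1} + (l - m) (P - l)^{-1} (P - m)^{-1}] this yields the norm
   estimate, with a constant depending only on these two bounded operators. *)

Lemma Cx_ext (a b : Cx) : Re a = Re b -> Im a = Im b -> a = b.
Proof. destruct a, b; simpl; intros -> ->; reflexivity. Qed.

Ltac ceq := apply Cx_ext; simpl; ring.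

Definition RtoC (t : R) : Cx := mkCx t 0.
Definition Cinv (a : Cx) : Cx :=
  mkCx (Re a / (Re a ^ 2 + Im a ^ 2)) (- Im a / (Re a ^ 2 + Im a ^ 2)).

Lemma Cnorm2_gt0 (a : Cx) : a <> C0 -> 0 < Re a ^ 2 + Im a ^ 2.
Proof.
  intros H. destruct (Req_dec (Re a) 0) as [h1|h1].
  - destruct (Req_dec (Im a) 0) as [h2|h2].
    + exfalso; apply H; apply Cx_ext; simpl; auto.
    + assert (0 < Im a * Im a) by (apply Rsqr_pos_lt; auto). simpl. nra.
  - assert (0 < Re a * Re a) by (apply Rsqr_pos_lt; auto). simpl. nra.
Qed.

Lemma CmulV (a : Cx) : a <> C0 -> Cmul a (Cinv a) = Defs.C1.
Proof.
  intros H. pose proof (Cnorm2_gt0 a H). apply Cx_ext; unfold Cinv; simpl; field; lra.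
Qed.

Lemma CmulVl (a : Cx) : a <> C0 -> Cmul (Cinv a) a = Defs.C1.
Proof.
  intros H. pose proof (Cnorm2_gt0 a H). apply Cx_ext; unfold Cinv; simpl; field; lra.
Qed.

Lemma Csubr0_eq (a b : Cx) : Csub a b = C0 -> a = b.
Proof.
  intros H. apply (f_equal Re) in H as H1. apply (f_equal Im) in H as H2.
  simpl in *. apply Cx_ext; lra.
Qed.

Lemma Cabs_ge0 (a : Cx) : 0 <= Cabs a.
Proof. unfold Cabs; apply sqrt_pos. Qed.

Lemma Cabs_sqr (a : Cx) : Cabs a * Cabs a = Re a ^ 2 + Im a ^ 2.
Proof. unfold Cabs; apply sqrt_sqrt; nra. Qed.

Lemma Cabs_real (t : R) : Cabs (RtoC t) = Rabs t.
Proof.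
  unfold Cabs, RtoC; simpl.
  replace (t * (t * 1) + 0 * (0 * 1)) with (Rsqr t) by (unfold Rsqr; ring).
  apply sqrt_Rsqr_abs.
Qed.

Lemma Cabs_C0 : Cabs C0 = 0.
Proof. rewrite <- (Rabs_R0), <- Cabs_real. reflexivity. Qed.

Lemma Cabs_C1 : Cabs Defs.C1 = 1.
Proof. rewrite <- (Rabs_R1), <- Cabs_real. reflexivity. Qed.

Lemma Cabs_eq0 (a : Cx) : Cabs a = 0 -> a = C0.
Proof. intros H. pose proof (Cabs_sqr a) as E. rewrite H in E. apply Cx_ext; simpl; nra. Qed.

Lemma Cabs_gt0 (a : Cx) : a <> C0 -> 0 < Cabs a.
Proof. intros H. destruct (Cabs_ge0 a); auto. exfalso; apply H, Cabs_eq0; auto. Qed.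

Lemma CabsM (a b : Cx) : Cabs (Cmul a b) = Cabs a * Cabs b.
Proof. unfold Cabs. rewrite <- sqrt_mult by nra. f_equal. simpl. ring. Qed.

Lemma CabsN (a : Cx) : Cabs (Copp a) = Cabs a.
Proof. unfold Cabs; simpl; f_equal; ring. Qed.

Lemma CabsV (a : Cx) : a <> C0 -> Cabs (Cinv a) = / Cabs a.
Proof.
  intros H. pose proof (Cabs_gt0 a H).
  pose proof (f_equal Cabs (CmulV a H)) as E. rewrite CabsM, Cabs_C1 in E.
  field_simplify_eq; lra.
Qed.

Lemma Cabs_triangle (a b : Cx) : Cabs (Cadd a b) <= Cabs a + Cabs b.
Proof.
  pose proof (Cabs_ge0 a). pose proof (Cabs_ge0 b). pose proof (Cabs_ge0 (Cadd a b)).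
  pose proof (Cabs_sqr a) as Ea. pose proof (Cabs_sqr b) as Eb.
  pose proof (Cabs_sqr (Cadd a b)) as Eab. simpl in Eab.
  (* Cauchy-Schwarz in R^2 *)
  assert (Hcs : Re a * Re b + Im a * Im b <= Cabs a * Cabs b).
  { destruct (Rle_dec (Re a * Re b + Im a * Im b) 0); [nra|].
    assert ((Re a * Re b + Im a * Im b) ^ 2 <= (Cabs a * Cabs b) ^ 2).
    { replace ((Cabs a * Cabs b) ^ 2) with ((Cabs a * Cabs a) * (Cabs b * Cabs b)) by ring.
      rewrite Ea, Eb. pose proof (pow2_ge_0 (Re a * Im b - Im a * Re b)). nra. }
    apply Rsqr_incr_0_var; unfold Rsqr; nra. }
  apply Rsqr_incr_0_var; [unfold Rsqr | nra].
  replace (Cabs (Cadd a b) * Cabs (Cadd a b)) with ((Re a + Re b) ^ 2 + (Im a + Im b) ^ 2)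
    by (rewrite Eab; ring).
  nra.
Qed.

Lemma Cabs_sub_le (a b : Cx) : Cabs (Csub a b) <= Cabs a + Cabs b.
Proof. unfold Csub. rewrite <- (CabsN b). apply Cabs_triangle. Qed.

Lemma le0_of_le_eps (a c : R) : 0 <= c -> (forall eps, 0 < eps -> a <= c * eps) -> a <= 0.
Proof.
  intros Hc H. apply Rnot_lt_le. intros Ha.
  assert (He : 0 < a / (c + 1)) by (apply Rdiv_lt_0_compat; lra).
  specialize (H _ He).
  assert (c * (a / (c + 1)) < a).
  { apply (Rmult_lt_reg_r (c + 1)); [lra|].
    replace (c * (a / (c + 1)) * (c + 1)) with (c * a) by (field; lra). nra. }
  lra.
Qed.

Notation "x '+v' y" := (kadd x y) (at level 50, left associativity).
Notation "'-v' x" := (kopp x) (at level 35, right associativity).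

Section Vectors.
Variable K : KreinSpace.
Implicit Types x y z u v : K.
Local Notation kz := (@kzero K).

Lemma kaddA x y z : x +v (y +v z) = (x +v y) +v z. Proof. apply kadd_assoc. Qed.
Lemma kaddC x y : x +v y = y +v x. Proof. apply kadd_comm. Qed.
Lemma kaddr0 x : x +v kz = x. Proof. apply kadd_0. Qed.
Lemma kadd0r x : kz +v x = x. Proof. rewrite kaddC; apply kaddr0. Qed.
Lemma kaddrN x : x +v -v x = kz. Proof. apply kadd_opp. Qed.
Lemma kaddNr x : -v x +v x = kz. Proof. rewrite kaddC; apply kaddrN. Qed.

Lemma kaddI z x y : z +v x = z +v y -> x = y.
Proof.
  intros H. apply (f_equal (fun w => -v z +v w)) in H.
  rewrite !kaddA, kaddNr, !kadd0r in H. exact H.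
Qed.

Lemma kadd_idem_eq0 z : z +v z = z -> z = kz.
Proof. intros H. apply (kaddI z). rewrite kaddr0. exact H. Qed.

Lemma kscale0r x : kscal C0 x = kz.
Proof. apply kadd_idem_eq0. rewrite <- kscal_adds. f_equal. ceq. Qed.

Lemma kscaler0 a : kscal a kz = kz.
Proof. apply kadd_idem_eq0. rewrite <- kscal_addv, kaddr0. reflexivity. Qed.

Lemma kopp_scale x : -v x = kscal (RtoC (-1)) x.
Proof.
  apply (kaddI x). rewrite kaddrN. rewrite <- (kscal_1 K x) at 1.
  rewrite <- kscal_adds, <- (kscale0r x). f_equal. ceq.
Qed.

Lemma koppr0 : -v kz = kz.
Proof. rewrite kopp_scale. apply kscaler0. Qed.

Lemma koppK x : -v -v x = x.
Proof. apply (kaddI (-v x)). rewrite kaddrN, kaddNr. reflexivity. Qed.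

Lemma kopprD x y : -v (x +v y) = -v x +v -v y.
Proof. rewrite !kopp_scale. apply kscal_addv. Qed.

Lemma kscalerN a x : kscal a (-v x) = -v kscal a x.
Proof. rewrite !kopp_scale, !kscal_mul. f_equal. ceq. Qed.

Lemma kscaleNr a x : kscal (Copp a) x = -v kscal a x.
Proof. rewrite !kopp_scale, !kscal_mul. f_equal. ceq. Qed.

Lemma kscalerBl a b x : kscal (Csub a b) x = kscal a x +v -v kscal b x.
Proof. unfold Csub. rewrite kscal_adds, kscaleNr. reflexivity. Qed.

Lemma kscalerBr a x y : kscal a (x +v -v y) = kscal a x +v -v kscal a y.
Proof. rewrite kscal_addv, kscalerN. reflexivity. Qed.

Lemma kscaleKV l x : l <> C0 -> kscal l (kscal (Cinv l) x) = x.
Proof. intros. rewrite kscal_mul, CmulV, kscal_1; auto. Qed.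

Lemma kscaleVK l x : l <> C0 -> kscal (Cinv l) (kscal l x) = x.
Proof. intros. rewrite kscal_mul, CmulVl, kscal_1; auto. Qed.

Lemma kscale_realM s t x : kscal (RtoC s) (kscal (RtoC t) x) = kscal (RtoC (s * t)) x.
Proof. rewrite kscal_mul. f_equal. unfold RtoC; ceq. Qed.

Lemma kadd_halves x : kscal (RtoC (1/2)) x +v kscal (RtoC (1/2)) x = x.
Proof.
  rewrite <- kscal_adds. rewrite <- (kscal_1 K x) at 2.
  f_equal. unfold RtoC; apply Cx_ext; simpl; field.
Qed.

Lemma ksubr0_eq x y : x +v -v y = kz -> x = y.
Proof. intros H. apply (kaddI (-v y)). rewrite kaddC, H, kaddNr. reflexivity. Qed.

Lemma kaddCA x y z : x +v (y +v z) = y +v (x +v z).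
Proof. rewrite !kaddA, (kaddC x y). reflexivity. Qed.

Lemma ksub_addl x y : (x +v y) +v -v x = y.
Proof. rewrite (kaddC x y), <- kaddA, kaddrN, kaddr0. reflexivity. Qed.

Lemma kopprB x y : -v (x +v -v y) = y +v -v x.
Proof. rewrite kopprD, koppK, kaddC. reflexivity. Qed.

Lemma ksubKr x y : x +v -v (x +v -v y) = y.
Proof. rewrite kopprB, (kaddCA x y), kaddrN, kaddr0. reflexivity. Qed.

Lemma ksub_telescope x y z : (x +v -v y) +v (y +v -v z) = x +v -v z.
Proof. rewrite <- kaddA, (kaddA (-v y)), kaddNr, kadd0r. reflexivity. Qed.

Lemma ksub_add2 x y u v : (x +v y) +v -v (u +v v) = (x +v -v u) +v (y +v -v v).
Proof. rewrite kopprD, <- !kaddA. f_equal. apply kaddCA. Qed.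

Lemma ksub_sub2 x y u v : (x +v -v y) +v -v (u +v -v v) = (x +v -v u) +v -v (y +v -v v).
Proof. rewrite ksub_add2. f_equal. rewrite kopprD. reflexivity. Qed.

Lemma knorm0 : knorm kz = 0.
Proof. rewrite <- (kscale0r kz), knorm_scal, Cabs_C0. ring. Qed.

Lemma knorm_scale_real t x : knorm (kscal (RtoC t) x) = Rabs t * knorm x.
Proof. rewrite knorm_scal, Cabs_real. reflexivity. Qed.

Lemma knormN x : knorm (-v x) = knorm x.
Proof. rewrite kopp_scale, knorm_scale_real, Rabs_left by lra. ring. Qed.

Lemma knorm_ge0 x : 0 <= knorm x.
Proof. pose proof (knorm_triangle K x (-v x)). rewrite kaddrN, knorm0, knormN in H. lra. Qed.

Lemma knorm_eq0 x : knorm x = 0 -> x = kz.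
Proof. apply knorm_def. Qed.

Lemma knorm_subC x y : knorm (x +v -v y) = knorm (y +v -v x).
Proof. rewrite <- kopprB, knormN. reflexivity. Qed.

Lemma knorm_sub_triangle x y z : knorm (x +v -v z) <= knorm (x +v -v y) + knorm (y +v -v z).
Proof. rewrite <- (ksub_telescope x y z). apply knorm_triangle. Qed.

Lemma knorm_sub_le x y : knorm (x +v -v y) <= knorm x + knorm y.
Proof. rewrite <- (knormN y). apply knorm_triangle. Qed.

End Vectors.

Section Adjoint.
Variable K : KreinSpace.
Implicit Types x y z : K.
Local Notation kz := (@kzero K).

Lemma formDr x y z : form x (y +v z) = Cadd (form x y) (form x z).
Proof.
  rewrite (form_herm K (y +v z) x), form_add_l, (form_herm K y x), (form_herm K z x).
  destruct (form y x), (form z x). ceq.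
Qed.

Lemma formZr a x y : form x (kscal a y) = Cmul (Cconj a) (form x y).
Proof.
  rewrite (form_herm K (kscal a y) x), form_scal_l, (form_herm K y x).
  destruct (form x y). ceq.
Qed.

Lemma form0r x : form x kz = C0.
Proof. rewrite <- (kscale0r K kz), formZr. ceq. Qed.

Lemma formNr x y : form x (-v y) = Copp (form x y).
Proof. rewrite kopp_scale, formZr. ceq. Qed.

Lemma formBr x y z : form x (y +v -v z) = Csub (form x y) (form x z).
Proof. rewrite formDr, formNr. reflexivity. Qed.

Lemma formBl x y z : form (x +v -v y) z = Csub (form x z) (form y z).
Proof. rewrite form_add_l, kopp_scale, form_scal_l. destruct (form y z). ceq. Qed.

Lemma form_nondegenerate y : (forall x, form x y = C0) -> y = kz.
Proof.
  intros H.
  destruct (fundamental_decomposition K) as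
    (Kp & Km & _ & _ & dec & _ & orth & pos & neg & _).
  destruct (dec y) as (yp & ym & Hp & Hm & ->).
  assert (Ep : form yp yp = C0).
  { pose proof (H yp) as E. rewrite formDr, (orth yp ym Hp Hm) in E.
    rewrite <- E. ceq. }
  assert (Em : form ym ym = C0).
  { pose proof (H ym) as E. rewrite formDr, (form_herm K yp ym), (orth yp ym Hp Hm) in E.
    rewrite <- E. ceq. }
  assert (yp = kz).
  { apply NNPP; intro n. specialize (pos yp Hp n). rewrite Ep in pos. simpl in pos; lra. }
  assert (ym = kz).
  { apply NNPP; intro n. specialize (neg ym Hm n). rewrite Em in neg. simpl in neg; lra. }
  subst. apply kaddr0.
Qed.

Lemma form_bounded : exists M, 0 <= M /\ forall x y, Cabs (form x y) <= M * knorm x * knorm y.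
Proof.
  destruct (form_continuous K) as [M HM]. exists (Rabs M). split; [apply Rabs_pos|].
  intros x y. specialize (HM x y).
  pose proof (knorm_ge0 K x). pose proof (knorm_ge0 K y).
  assert (M * knorm x * knorm y <= Rabs M * knorm x * knorm y).
  { rewrite !Rmult_assoc. apply Rmult_le_compat_r; [nra | apply Rle_abs]. }
  lra.
Qed.

Lemma form_dense_eq0 (D : K -> Prop) y :
  (forall x eps, 0 < eps -> exists x', D x' /\ knorm (x +v -v x') < eps) ->
  (forall x, D x -> form x y = C0) -> forall x, form x y = C0.
Proof.
  intros Hd H x. destruct form_bounded as (M & HM0 & HM).
  pose proof (knorm_ge0 K y).
  apply Cabs_eq0, Rle_antisym; [|apply Cabs_ge0].
  apply (le0_of_le_eps _ (M * knorm y)); [nra|].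
  intros eps He. destruct (Hd x eps He) as (x' & Dx' & Hx').
  replace (form x y) with (form (x +v -v x') y)
    by (rewrite formBl, (H x' Dx'); destruct (form x y); ceq).
  eapply Rle_trans; [apply HM|].
  pose proof (knorm_ge0 K (x +v -v x')).
  replace (M * knorm (x +v -v x') * knorm y) with ((M * knorm y) * knorm (x +v -v x')) by ring.
  apply Rmult_le_compat_l; nra.
Qed.

Lemma adjoint_unique (T : Op K) z1 z2 : densely_defined T ->
  (forall x, dom T x -> form x z1 = form x z2) -> z1 = z2.
Proof.
  intros Hd H. apply ksubr0_eq, form_nondegenerate, (form_dense_eq0 (dom T)).
  - intros x eps He. destruct (Hd x eps He) as (x' & ? & ?). exists x'. auto.
  - intros x Dx. rewrite formBr, H by auto. destruct (form x z2); ceq.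
Qed.

Lemma adjoint_spec (T : Op K) y : dom (kadj T) y ->
  forall x, dom T x -> form (app T x) y = form x (app (kadj T) y).
Proof.
  intros Hy. apply (epsilon_spec (inhabits kz)
    (fun z => forall x, dom T x -> form (app T x) y = form x z)).
  exact Hy.
Qed.

Lemma adjoint_charac (T : Op K) y z : densely_defined T ->
  (forall x, dom T x -> form (app T x) y = form x z) ->
  dom (kadj T) y /\ app (kadj T) y = z.
Proof.
  intros Hd H. assert (D : dom (kadj T) y) by (exists z; exact H).
  split; auto. apply (adjoint_unique T); auto.
  intros x Dx. rewrite <- adjoint_spec; auto.
Qed.

Lemma adjoint_linear (T : Op K) : densely_defined T -> linear_op (kadj T).
Proof.
  intros Hd.
  assert (HD : forall y1 y2, dom (kadj T) y1 -> dom (kadj T) y2 ->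
            dom (kadj T) (y1 +v y2) /\
            app (kadj T) (y1 +v y2) = app (kadj T) y1 +v app (kadj T) y2).
  { intros y1 y2 D1 D2. apply adjoint_charac; auto. intros x Dx.
    rewrite !formDr, !adjoint_spec; auto. }
  assert (HZ : forall a y, dom (kadj T) y ->
            dom (kadj T) (kscal a y) /\ app (kadj T) (kscal a y) = kscal a (app (kadj T) y)).
  { intros a y D. apply adjoint_charac; auto. intros x Dx.
    rewrite !formZr, !adjoint_spec; auto. }
  split; [split; [|split]|split].
  - exists kz. intros x _. rewrite !form0r. reflexivity.
  - intros; apply HD; auto.
  - intros; apply HZ; auto.
  - intros; apply HD; auto.
  - intros; apply HZ; auto.
Qed.

Lemma adjoint_closed (T : Op K) : densely_defined T -> closed_op (kadj T).
Proof.
  intros Hd u x y Du Cu Cy. apply adjoint_charac; auto.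
  intros v Dv. apply Csubr0_eq, Cabs_eq0.
  destruct form_bounded as (M & HM0 & HM).
  pose proof (knorm_ge0 K v). pose proof (knorm_ge0 K (app T v)).
  apply Rle_antisym; [|apply Cabs_ge0].
  apply (le0_of_le_eps _ (M * (knorm (app T v) + knorm v))); [nra|].
  intros eps He.
  destruct (Cu eps He) as [N1 HN1]. destruct (Cy eps He) as [N2 HN2].
  set (n := max N1 N2). specialize (HN1 n ltac:(lia)). specialize (HN2 n ltac:(lia)).
  unfold kdist in *.
  replace (Csub (form (app T v) x) (form v y)) with
    (Cadd (Copp (form (app T v) (u n +v -v x))) (form v (app (kadj T) (u n) +v -v y))).
  2:{ rewrite !formBr, <- (adjoint_spec T (u n) (Du n) v Dv).
      destruct (form (app T v) x), (form (app T v) (u n)), (form v y). ceq. }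
  eapply Rle_trans; [apply Cabs_triangle|]. rewrite CabsN.
  pose proof (HM (app T v) (u n +v -v x)). pose proof (HM v (app (kadj T) (u n) +v -v y)).
  pose proof (knorm_ge0 K (u n +v -v x)). pose proof (knorm_ge0 K (app (kadj T) (u n) +v -v y)).
  assert (M * knorm (app T v) * knorm (u n +v -v x) <= M * knorm (app T v) * eps)
    by (apply Rmult_le_compat_l; nra).
  assert (M * knorm v * knorm (app (kadj T) (u n) +v -v y) <= M * knorm v * eps)
    by (apply Rmult_le_compat_l; nra).
  nra.
Qed.

End Adjoint.

Lemma half_pow_gt0 n : 0 < (/2) ^ n.
Proof. apply pow_lt; lra. Qed.

Lemma half_pow_small eps : 0 < eps -> exists N, forall n, (N <= n)%nat -> (/2) ^ n < eps.
Proof.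
  intros He. destruct (pow_lt_1_zero (/2) ltac:(rewrite Rabs_pos_eq; lra) eps He) as [N HN].
  exists N. intros n Hn. specialize (HN n Hn). rewrite Rabs_pos_eq in HN; auto.
  apply pow_le; lra.
Qed.

Section GeometricSequences.
Variable K : KreinSpace.
Variable v : nat -> K.
Variable C : R.
Hypothesis geometric_steps : forall k, knorm (v (S k) +v -v v k) <= C * (/2) ^ k.

Lemma geometric_steps_dist q d :
  knorm (v (q + d)%nat +v -v v q) <= 2 * C * ((/2) ^ q - (/2) ^ (q + d)).
Proof.
  induction d.
  - rewrite Nat.add_0_r, kaddrN, knorm0. lra.
  - replace (q + S d)%nat with (S (q + d)) by lia.
    eapply Rle_trans; [apply (knorm_sub_triangle K _ (v (q + d)%nat))|].
    rewrite <- tech_pow_Rmult. specialize (geometric_steps (q + d)%nat). lra.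
Qed.

Lemma geometric_steps_cauchy : 0 <= C -> cauchy_wrt kdist v.
Proof.
  intros HC eps He.
  destruct (half_pow_small (eps / (4 * C + 1))) as [N HN]; [apply Rdiv_lt_0_compat; lra|].
  exists N. intros n m Hn Hm. unfold kdist.
  pose proof (geometric_steps_dist N (n - N)) as B1.
  pose proof (geometric_steps_dist N (m - N)) as B2.
  replace (N + (n - N))%nat with n in B1 by lia. replace (N + (m - N))%nat with m in B2 by lia.
  pose proof (half_pow_gt0 n). pose proof (half_pow_gt0 m).
  specialize (HN N (le_n N)).
  eapply Rle_lt_trans; [apply (knorm_sub_triangle K _ (v N))|].
  rewrite (knorm_subC K (v N)).
  assert (0 < eps / (4 * C + 1)) by (apply Rdiv_lt_0_compat; lra).
  assert (eps / (4 * C + 1) * (4 * C + 1) = eps) by (field; lra).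
  assert (4 * C * (/2) ^ N <= 4 * C * (eps / (4 * C + 1))) by (apply Rmult_le_compat_l; lra).
  nra.
Qed.

Lemma geometric_steps_converge : 0 <= C -> exists l, conv_wrt kdist v l.
Proof. intros HC. apply knorm_complete, geometric_steps_cauchy, HC. Qed.

End GeometricSequences.

Lemma knorm_lim_sub_le (K : KreinSpace) (u : nat -> K) l p B N0 :
  conv_wrt kdist u l -> (forall k, (N0 <= k)%nat -> knorm (u k +v -v p) <= B) ->
  knorm (l +v -v p) <= B.
Proof.
  intros Hc Hb.
  enough (knorm (l +v -v p) - B <= 0) by lra.
  apply (le0_of_le_eps _ 1); [lra|]. intros eps He.
  destruct (Hc eps He) as [N HN]. specialize (HN (max N N0) (Nat.le_max_l _ _)).
  unfold kdist in HN.
  pose proof (knorm_sub_triangle K l (u (max N N0)) p) as Ht.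
  rewrite (knorm_subC K l (u (max N N0))) in Ht.
  specialize (Hb (max N N0) (Nat.le_max_r _ _)). lra.
Qed.

Section ClosedGraph.
Variable K : KreinSpace.
Local Notation kz := (@kzero K).
Variable F : K -> K.
Hypothesis F_additive : forall x y, F (x +v y) = F x +v F y.
Hypothesis F_real_homogeneous : forall t x, F (kscal (RtoC t) x) = kscal (RtoC t) (F x).
Hypothesis F_closed : forall (u : nat -> K) x y,
  conv_wrt kdist u x -> conv_wrt kdist (fun n => F (u n)) y -> F x = y.

Lemma F0 : F kz = kz.
Proof. apply kadd_idem_eq0. rewrite <- F_additive, kaddr0. reflexivity. Qed.

Lemma FB x y : F (x +v -v y) = F x +v -v F y.
Proof.
  rewrite F_additive. f_equal.
  apply (kaddI K (F y)). rewrite <- F_additive, !kaddrN. apply F0.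
Qed.

Definition near_sublevel (n : R) (x : K) : Prop :=
  forall eps, 0 < eps -> exists a, knorm (F a) <= n /\ knorm (x +v -v a) < eps.

Lemma near_sublevel_mono n1 n2 x : n1 <= n2 -> near_sublevel n1 x -> near_sublevel n2 x.
Proof. intros H Hc eps He. destruct (Hc eps He) as (a & ? & ?). exists a. split; auto; lra. Qed.

Lemma near_sublevel_scale m s y : 0 < s -> near_sublevel m y ->
  near_sublevel (s * m) (kscal (RtoC s) y).
Proof.
  intros Hs Hc eps He.
  destruct (Hc (eps / s) ltac:(apply Rdiv_lt_0_compat; lra)) as (a & Ha & Hy).
  exists (kscal (RtoC s) a).
  rewrite F_real_homogeneous, knorm_scale_real, <- kscalerBr, knorm_scale_real, Rabs_pos_eq by lra.
  split; [apply Rmult_le_compat_l; lra|].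
  apply (Rmult_lt_compat_l s) in Hy; auto.
  replace (s * (eps / s)) with eps in Hy by (field; lra). lra.
Qed.

(* A pair [(c, r)] stands for the ball [B(c, r)]; the ball [B(c', r')] lies in it, has at most
   half its radius, and keeps distance [r'] from the sublevel set [{a | |F a| <= k}]. *)
Definition shrunk_ball (k : nat) (cr cr' : K * R) : Prop :=
  knorm (fst cr' +v -v fst cr) < snd cr / 2 /\ 0 < snd cr' /\ snd cr' <= snd cr / 2 /\
  forall a, knorm (F a) <= INR k -> 2 * snd cr' <= knorm (fst cr' +v -v a).

Lemma shrunk_ball_exists k cr : 0 < snd cr ->
  ~ (forall x, knorm (x +v -v fst cr) < snd cr / 2 -> near_sublevel (INR k) x) ->
  exists cr', shrunk_ball k cr cr'.
Proof.
  intros Hr Hn. apply not_all_ex_not in Hn as [x Hx].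
  apply imply_to_and in Hx as [Hx Hcl].
  apply not_all_ex_not in Hcl as [eps Heps].
  apply imply_to_and in Heps as [He Hno].
  exists (x, Rmin eps (snd cr) / 2). unfold shrunk_ball; simpl. repeat split.
  - lra.
  - pose proof (Rmin_glb_lt eps (snd cr) 0 He Hr). lra.
  - pose proof (Rmin_r eps (snd cr)). lra.
  - intros a Ha. apply Rnot_lt_le. intros Hlt. apply Hno. exists a. split; auto.
    pose proof (Rmin_l eps (snd cr)). lra.
Qed.

Definition shrink_ball (k : nat) (cr : K * R) : K * R :=
  epsilon (inhabits (kz, 1)) (shrunk_ball k cr).

Fixpoint nested_balls (k : nat) : K * R :=
  match k with O => (kz, 1) | S k => shrink_ball k (nested_balls k) end.

(* Baire: otherwise the nested balls avoiding the successive sublevel sets would converge to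
   a point [l] outside all of them, contradicting [|F l| <= N] for large [N]. *)
Lemma near_sublevel_ball : exists n c r, 0 < r /\
  forall x, knorm (x +v -v c) < r -> near_sublevel n x.
Proof.
  apply NNPP. intros Hn.
  set (c := fun k => fst (nested_balls k)). set (r := fun k => snd (nested_balls k)).
  assert (Hstep : forall k, 0 < r k -> shrunk_ball k (nested_balls k) (nested_balls (S k))).
  { intros k Hk. apply (epsilon_spec (inhabits (kz, 1)) (shrunk_ball k (nested_balls k))).
    apply shrunk_ball_exists; auto. intros Hball. apply Hn.
    exists (INR k), (c k), (r k / 2). split; [lra | exact Hball]. }
  assert (Hpos : forall k, 0 < r k).
  { induction k; [unfold r; simpl; lra | apply Hstep; auto]. }
  assert (Hinv : forall k, knorm (c (S k) +v -v c k) < r k / 2 /\ r (S k) <= r k / 2 /\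
      forall a, knorm (F a) <= INR k -> 2 * r (S k) <= knorm (c (S k) +v -v a)).
  { intros k. destruct (Hstep k (Hpos k)) as (h1 & _ & h3 & h4). auto. }
  assert (Hr0 : forall k, r k <= (/2) ^ k).
  { induction k; [unfold r; simpl; lra|]. destruct (Hinv k) as (_ & ? & _). simpl. lra. }
  assert (Hcd : forall q d, knorm (c (q + d)%nat +v -v c q) <= r q * (1 - (/2) ^ d)).
  { assert (Hrd : forall q d, r (q + d)%nat <= r q * (/2) ^ d).
    { intros q d; induction d; [rewrite Nat.add_0_r; simpl; lra|].
      replace (q + S d)%nat with (S (q + d)) by lia.
      destruct (Hinv (q + d)%nat) as (_ & ? & _). pose proof (Hpos q). simpl. nra. }
    intros q d; induction d; [rewrite Nat.add_0_r, kaddrN, knorm0; simpl; lra|].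
    replace (q + S d)%nat with (S (q + d)) by lia.
    eapply Rle_trans; [apply (knorm_sub_triangle K _ (c (q + d)%nat))|].
    destruct (Hinv (q + d)%nat) as (? & _ & _). specialize (Hrd q d). simpl. lra. }
  destruct (geometric_steps_converge K c (1/2)) as [l Hl]; [|lra|].
  { intros k. destruct (Hinv k) as (? & _ & _). specialize (Hr0 k). lra. }
  destruct (INR_unbounded (knorm (F l))) as [N HN].
  assert (Hlc : knorm (l +v -v c (S N)) <= r (S N)).
  { apply (knorm_lim_sub_le K c l (c (S N)) (r (S N)) (S N) Hl). intros k Hk.
    replace k with (S N + (k - S N))%nat by lia. specialize (Hcd (S N) (k - S N)%nat).
    pose proof (half_pow_gt0 (k - S N)). pose proof (Hpos (S N)). nra. }
  destruct (Hinv N) as (_ & _ & Hb). specialize (Hb l ltac:(lra)).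
  rewrite (knorm_subC K) in Hb. pose proof (Hpos (S N)). lra.
Qed.

Lemma near_sublevel_ball0 : exists m rho, 0 <= m /\ 0 < rho /\
  forall y, knorm y < rho -> near_sublevel m y.
Proof.
  destruct near_sublevel_ball as (n & c & r & Hr & Hb).
  exists (2 * Rabs n), (2 * r). split; [pose proof (Rabs_pos n); lra|]. split; [lra|].
  intros z Hz. set (y := kscal (RtoC (1/2)) z).
  assert (Hy : knorm y < r) by (unfold y; rewrite knorm_scale_real, Rabs_pos_eq by lra; lra).
  assert (Hp : near_sublevel (Rabs n) (c +v y)).
  { apply (near_sublevel_mono n); [apply Rle_abs|]. apply Hb. rewrite ksub_addl. auto. }
  assert (Hm : near_sublevel (Rabs n) (c +v -v y)).
  { apply (near_sublevel_mono n); [apply Rle_abs|]. apply Hb. rewrite ksub_addl, knormN. auto. }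
  replace z with ((c +v y) +v -v (c +v -v y))
    by (rewrite ksub_add2, kaddrN, kadd0r, koppK; apply kadd_halves).
  intros eps He. destruct (Hp (eps / 2) ltac:(lra)) as (a1 & Ha1 & Hx1).
  destruct (Hm (eps / 2) ltac:(lra)) as (a2 & Ha2 & Hx2).
  exists (a1 +v -v a2). rewrite FB, ksub_sub2. split.
  - eapply Rle_trans; [apply knorm_sub_le|]. lra.
  - eapply Rle_lt_trans; [apply knorm_sub_le|]. lra.
Qed.

Lemma near_sublevel_small m rho k y : 0 < rho ->
  (forall y, knorm y < rho -> near_sublevel m y) ->
  knorm y < rho * (/2) ^ k -> near_sublevel (m * (/2) ^ k) y.
Proof.
  intros Hr Hb Hy.
  replace y with (kscal (RtoC ((/2) ^ k)) (kscal (RtoC (2 ^ k)) y)).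
  2:{ rewrite kscale_realM, <- Rpow_mult_distr. replace (/2 * 2) with 1 by field.
      rewrite pow1. apply (kscal_1 K). }
  rewrite Rmult_comm. apply near_sublevel_scale; [apply half_pow_gt0|]. apply Hb.
  rewrite knorm_scale_real, Rabs_pos_eq by (apply pow_le; lra).
  apply (Rmult_lt_compat_l (2 ^ k)) in Hy; [|apply pow_lt; lra].
  replace (2 ^ k * (rho * (/2) ^ k)) with (rho * (2 * /2) ^ k) in Hy
    by (rewrite Rpow_mult_distr; ring).
  replace (2 * /2) with 1 in Hy by field. rewrite pow1 in Hy. lra.
Qed.

Section Iteration.
Variables (m rho : R) (y : K).
Hypothesis Hm : 0 <= m.
Hypothesis Hrho : 0 < rho.
Hypothesis Hball : forall y, knorm y < rho -> near_sublevel m y.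
Hypothesis Hy : knorm y < rho.

Definition correction (k : nat) (e : K) : K :=
  epsilon (inhabits kz) (fun a =>
    knorm (F a) <= m * (/2) ^ k /\ knorm (e +v -v a) < rho * (/2) ^ (S k)).

Fixpoint residual (k : nat) : K :=
  match k with O => y | S k => residual k +v -v correction k (residual k) end.

Fixpoint partial_sum (k : nat) : K :=
  match k with O => kz | S k => partial_sum k +v correction k (residual k) end.

Lemma correction_spec k e : knorm e < rho * (/2) ^ k ->
  knorm (F (correction k e)) <= m * (/2) ^ k /\
  knorm (e +v -v correction k e) < rho * (/2) ^ (S k).
Proof.
  intros He. pose proof (near_sublevel_small m rho k e Hrho Hball He) as Hc.
  assert (0 < rho * (/2) ^ (S k)) by (apply Rmult_lt_0_compat; [lra | apply half_pow_gt0]).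
  destruct (Hc _ H) as (a & Ha).
  apply (epsilon_spec (inhabits kz) (fun a =>
    knorm (F a) <= m * (/2) ^ k /\ knorm (e +v -v a) < rho * (/2) ^ (S k))).
  exists a; exact Ha.
Qed.

Lemma knorm_residual k : knorm (residual k) < rho * (/2) ^ k.
Proof. induction k; [simpl; lra|]. apply correction_spec; auto. Qed.

Lemma partial_sum_residual k : partial_sum k +v residual k = y.
Proof.
  induction k; [apply kadd0r|]. simpl. rewrite <- IHk, <- kaddA. f_equal.
  rewrite (kaddCA K _ (residual k)), kaddrN, kaddr0. reflexivity.
Qed.

Lemma partial_sum_conv : conv_wrt kdist partial_sum y.
Proof.
  intros eps He. destruct (half_pow_small (eps / rho)) as [N HN]; [apply Rdiv_lt_0_compat; lra|].
  exists N. intros n Hn. unfold kdist. rewrite <- (partial_sum_residual n).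
  rewrite kopprD, kaddA, kaddrN, kadd0r, knormN.
  pose proof (knorm_residual n). specialize (HN n Hn).
  apply (Rmult_lt_compat_l rho) in HN; auto.
  replace (rho * (eps / rho)) with eps in HN by (field; lra). lra.
Qed.

Lemma F_partial_sum_step k :
  knorm (F (partial_sum (S k)) +v -v F (partial_sum k)) <= m * (/2) ^ k.
Proof. simpl. rewrite F_additive, ksub_addl. apply correction_spec, knorm_residual. Qed.

Lemma knorm_F_le_ball : knorm (F y) <= 2 * m.
Proof.
  destruct (geometric_steps_converge K (fun k => F (partial_sum k)) m F_partial_sum_step Hm)
    as [z Hz].
  replace z with (F y) in Hz by (apply (F_closed partial_sum); auto; apply partial_sum_conv).
  rewrite <- (kaddr0 K (F y)), <- koppr0.
  apply (knorm_lim_sub_le K _ _ _ _ 0 Hz). intros k _.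
  pose proof (geometric_steps_dist K (fun k => F (partial_sum k)) m F_partial_sum_step 0 k) as G.
  simpl in G. rewrite F0, koppr0, kaddr0 in G. rewrite koppr0, kaddr0.
  pose proof (half_pow_gt0 k). nra.
Qed.

End Iteration.

Theorem closed_graph : exists M, forall x, knorm (F x) <= M * knorm x.
Proof.
  destruct near_sublevel_ball0 as (m & rho & Hm & Hr & Hb).
  exists (4 * m / rho). intros x.
  destruct (Req_dec (knorm x) 0) as [h|h].
  { apply knorm_eq0 in h. subst x. rewrite F0, knorm0. lra. }
  pose proof (knorm_ge0 K x).
  set (t := rho / (2 * knorm x)).
  assert (Ht : 0 < t) by (unfold t; apply Rdiv_lt_0_compat; lra).
  assert (Hy : knorm (kscal (RtoC t) x) < rho).
  { rewrite knorm_scale_real, Rabs_pos_eq by lra. unfold t. field_simplify; lra. }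
  pose proof (knorm_F_le_ball m rho (kscal (RtoC t) x) Hm Hr Hb Hy) as B.
  rewrite F_real_homogeneous, knorm_scale_real, Rabs_pos_eq in B by lra.
  apply (Rmult_le_reg_l t); auto.
  replace (t * (4 * m / rho * knorm x)) with (2 * m) by (unfold t; field; lra). lra.
Qed.

End ClosedGraph.

Lemma sup_of_is_lub (P : R -> Prop) : (exists x, P x) ->
  (exists B, forall x, P x -> x <= B) -> is_lub P (sup_of P).
Proof.
  intros He [B HB]. unfold sup_of. apply epsilon_spec.
  destruct (completeness P) as [m Hm]; [exists B; exact HB | exact He |]. exists m; exact Hm.
Qed.

Section Operators.
Variable K : KreinSpace.
Local Notation kz := (@kzero K).
Implicit Types S A B : Op K.
Implicit Types x y : K.

Section Linear.
Variable S : Op K.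
Hypothesis HS : linear_op S.

Lemma linear_dom0 : dom S kz.
Proof. apply HS. Qed.
Lemma linear_domD x y : dom S x -> dom S y -> dom S (x +v y).
Proof. apply HS. Qed.
Lemma linear_domZ a x : dom S x -> dom S (kscal a x).
Proof. apply HS. Qed.
Lemma linear_appD x y : dom S x -> dom S y -> app S (x +v y) = app S x +v app S y.
Proof. apply HS. Qed.
Lemma linear_appZ a x : dom S x -> app S (kscal a x) = kscal a (app S x).
Proof. apply HS. Qed.
Lemma linear_domN x : dom S x -> dom S (-v x).
Proof. rewrite kopp_scale. apply linear_domZ. Qed.
Lemma linear_appN x : dom S x -> app S (-v x) = -v app S x.
Proof. rewrite !kopp_scale. apply linear_appZ. Qed.
Lemma linear_domB x y : dom S x -> dom S y -> dom S (x +v -v y).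
Proof. intros; apply linear_domD, linear_domN; auto. Qed.
Lemma linear_appB x y : dom S x -> dom S y -> app S (x +v -v y) = app S x +v -v app S y.
Proof. intros; rewrite linear_appD, linear_appN; auto using linear_domN. Qed.
Lemma linear_app0 : app S kz = kz.
Proof. apply kadd_idem_eq0. rewrite <- linear_appD, kaddr0; auto using linear_dom0. Qed.

Lemma shift_appD l x y : dom S x -> dom S y ->
  shift_app S l (x +v y) = shift_app S l x +v shift_app S l y.
Proof. intros. unfold shift_app. rewrite linear_appD, kscal_addv by auto. apply ksub_add2. Qed.

Lemma shift_appZ l a x : dom S x -> shift_app S l (kscal a x) = kscal a (shift_app S l x).
Proof.
  intros. unfold shift_app. rewrite linear_appZ, kscalerBr, !kscal_mul by auto.
  do 3 f_equal. destruct a, l; ceq.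
Qed.

Lemma shift_appB l x y : dom S x -> dom S y ->
  shift_app S l (x +v -v y) = shift_app S l x +v -v shift_app S l y.
Proof.
  intros. rewrite shift_appD, !kopp_scale, shift_appZ; auto using linear_domN.
Qed.

Lemma shift_app0 l : shift_app S l kz = kz.
Proof. unfold shift_app. rewrite linear_app0, kscaler0, kaddrN. reflexivity. Qed.

End Linear.

Lemma opmul_linear A B : linear_op A -> linear_op B -> linear_op (opmul A B).
Proof.
  intros HA HB. split; [split; [|split]|split]; simpl.
  - rewrite linear_app0; auto using linear_dom0.
  - intros x y [Dx Dx'] [Dy Dy']. rewrite linear_appD; auto using linear_domD.
  - intros a x [Dx Dx']. rewrite linear_appZ; auto using linear_domZ.
  - intros x y [Dx Dx'] [Dy Dy']. rewrite !linear_appD; auto.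
  - intros a x [Dx Dx']. rewrite !linear_appZ; auto.
Qed.

Lemma shift_app_change S l m x :
  shift_app S m x = shift_app S l x +v kscal (Csub l m) x.
Proof.
  unfold shift_app. rewrite kscalerBl, <- kaddA. f_equal.
  rewrite kaddA, kaddNr, kadd0r. reflexivity.
Qed.

Definition resolv S (l : Cx) (y : K) : K :=
  epsilon (inhabits kz) (fun x => dom S x /\ shift_app S l x = y).

Section Resolvent.
Variables (S : Op K) (l : Cx).
Hypothesis HS : linear_op S.
Hypothesis Hl : in_resolvent S l.

Lemma resolv_spec y : dom S (resolv S l y) /\ shift_app S l (resolv S l y) = y.
Proof.
  apply (epsilon_spec (inhabits kz) (fun x => dom S x /\ shift_app S l x = y)).
  destruct Hl as [H _]. destruct (H y) as [x [Hx _]]. exists x; exact Hx.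
Qed.

Lemma resolv_dom y : dom S (resolv S l y).
Proof. apply resolv_spec. Qed.

Lemma shift_resolv y : shift_app S l (resolv S l y) = y.
Proof. apply resolv_spec. Qed.

Lemma resolv_unique x y : dom S x -> shift_app S l x = y -> resolv S l y = x.
Proof.
  intros Dx Hx. destruct Hl as [H _]. destruct (H y) as [x0 [_ Hu]].
  rewrite <- (Hu x (conj Dx Hx)). symmetry. apply Hu, resolv_spec.
Qed.

Lemma resolvD y1 y2 : resolv S l (y1 +v y2) = resolv S l y1 +v resolv S l y2.
Proof.
  apply resolv_unique; [apply linear_domD; auto using resolv_dom|].
  rewrite shift_appD, !shift_resolv; auto using resolv_dom.
Qed.

Lemma resolvZ a y : resolv S l (kscal a y) = kscal a (resolv S l y).
Proof.
  apply resolv_unique; [apply linear_domZ; auto using resolv_dom|].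
  rewrite shift_appZ, !shift_resolv; auto using resolv_dom.
Qed.

Lemma resolvB y1 y2 : resolv S l (y1 +v -v y2) = resolv S l y1 +v -v resolv S l y2.
Proof. rewrite resolvD, !kopp_scale, resolvZ. reflexivity. Qed.

Lemma resolv_bounded : exists N, 0 <= N /\ forall y, knorm (resolv S l y) <= N * knorm y.
Proof.
  destruct Hl as [_ [M HM]]. exists (Rabs M). split; [apply Rabs_pos|].
  intros y. specialize (HM (resolv S l y) (resolv_dom y)). rewrite shift_resolv in HM.
  pose proof (knorm_ge0 K y). pose proof (Rle_abs M). nra.
Qed.

Lemma resnorm_is_lub : is_lub
  (fun r => exists x, dom S x /\ knorm (shift_app S l x) <= 1 /\ r = knorm x) (resnorm S l).
Proof.
  apply sup_of_is_lub.
  - exists 0, kz. rewrite shift_app0, knorm0 by auto. repeat split; auto using linear_dom0; lra.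
  - destruct resolv_bounded as (N & HN & HB). exists N. intros r (x & Dx & Hx & ->).
    rewrite <- (resolv_unique x (shift_app S l x)) by auto.
    eapply Rle_trans; [apply HB|]. nra.
Qed.

Lemma knorm_resolv_le y : knorm (resolv S l y) <= resnorm S l * knorm y.
Proof.
  destruct (Req_dec (knorm y) 0) as [h|h].
  { apply knorm_eq0 in h. subst y.
    rewrite (resolv_unique kz kz), knorm0; auto using linear_dom0, shift_app0. lra. }
  pose proof (knorm_ge0 K y). set (t := / knorm y).
  assert (Ht : 0 < t) by (apply Rinv_0_lt_compat; lra).
  assert (Hsup : knorm (kscal (RtoC t) (resolv S l y)) <= resnorm S l).
  { apply resnorm_is_lub. exists (kscal (RtoC t) (resolv S l y)).
    split; [apply linear_domZ; auto using resolv_dom|]. split; auto.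
    rewrite shift_appZ, shift_resolv, knorm_scale_real, Rabs_pos_eq by (auto using resolv_dom; lra).
    unfold t. rewrite Rinv_l by lra. lra. }
  rewrite knorm_scale_real, Rabs_pos_eq in Hsup by lra.
  apply (Rmult_le_compat_r (knorm y)) in Hsup; [|lra].
  unfold t in Hsup. replace (/ knorm y * knorm (resolv S l y) * knorm y)
    with (knorm (resolv S l y)) in Hsup by (field; lra). lra.
Qed.

Lemma knorm_resolv_le_Rmax y : knorm (resolv S l y) <= Rmax 1 (resnorm S l) * knorm y.
Proof.
  eapply Rle_trans; [apply knorm_resolv_le|].
  apply Rmult_le_compat_r; [apply knorm_ge0 | apply Rmax_r].
Qed.

Lemma resnorm_le Bd : 0 <= Bd ->
  (forall x, dom S x -> knorm x <= Bd * knorm (shift_app S l x)) -> resnorm S l <= Bd.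
Proof.
  intros HB H. apply resnorm_is_lub. intros r (x & Dx & Hx & ->).
  specialize (H x Dx). pose proof (knorm_ge0 K (shift_app S l x)). nra.
Qed.

End Resolvent.

Lemma resolv_change S l m y : linear_op S -> in_resolvent S l -> in_resolvent S m ->
  resolv S l y = resolv S m (y +v kscal (Csub l m) (resolv S l y)).
Proof.
  intros HS Hl Hm. symmetry. apply resolv_unique; auto using resolv_dom.
  rewrite (shift_app_change S l m), shift_resolv; auto.
Qed.

Lemma resolvent_identity S l m y : linear_op S -> in_resolvent S l -> in_resolvent S m ->
  resolv S l y = resolv S m y +v kscal (Csub l m) (resolv S l (resolv S m y)).
Proof.
  intros HS Hl Hm. apply resolv_unique; auto.
  - apply linear_domD, linear_domZ; auto using resolv_dom.
  - rewrite shift_appD, shift_appZ, shift_resolv; auto using resolv_dom, linear_domZ.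
    rewrite (shift_app_change S m l), shift_resolv, <- kaddA, <- kscal_adds; auto.
    replace (Cadd (Csub m l) (Csub l m)) with C0 by ceq.
    rewrite kscale0r, kaddr0. reflexivity.
Qed.

Lemma knorm_comp_resolv_le S l nu (G : K -> K) c N :
  linear_op S -> in_resolvent S l -> in_resolvent S nu -> 0 <= c ->
  (forall y, knorm (G (resolv S nu y)) <= c * knorm y) ->
  (forall y, knorm (resolv S l y) <= N * knorm y) ->
  forall y, knorm (G (resolv S l y)) <= c * (1 + Cabs (Csub l nu) * N) * knorm y.
Proof.
  intros HS Hl Hn Hc HG HR y. rewrite (resolv_change S l nu y); auto.
  eapply Rle_trans; [apply HG|].
  rewrite Rmult_assoc. apply Rmult_le_compat_l; auto.
  eapply Rle_trans; [apply knorm_triangle|]. rewrite knorm_scal.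
  pose proof (Cabs_ge0 (Csub l nu)).
  assert (Cabs (Csub l nu) * knorm (resolv S l y) <= Cabs (Csub l nu) * (N * knorm y))
    by (apply Rmult_le_compat_l; auto).
  lra.
Qed.

End Operators.
Arguments resolv {K} S l y.

Definition op_bounded {K : KreinSpace} (F : K -> K) : Prop :=
  exists c, 0 <= c /\ forall y, knorm (F y) <= c * knorm y.

Section Products.
Variable K : KreinSpace.
Local Notation kz := (@kzero K).
Variables A B : Op K.
Hypothesis HA : linear_op A.
Hypothesis HB : linear_op B.

Definition product_solution (l : Cx) (w : K) : K :=
  kscal (Cinv l) (app A (resolv (opmul B A) l (app B w)) +v -v w).

Lemma product_solution_spec l w : l <> C0 -> in_resolvent (opmul B A) l ->
  dom (opmul A B) w ->
  dom (opmul A B) (product_solution l w) /\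
  shift_app (opmul A B) l (product_solution l w) = w.
Proof.
  intros Hl Hr [Dw1 Dw2].
  set (u := resolv (opmul B A) l (app B w)).
  destruct (resolv_dom K _ l Hr (app B w)) as [Du1 Du2]. fold u in Du1, Du2.
  pose proof (shift_resolv K _ l Hr (app B w)) as Su. fold u in Su.
  unfold shift_app in Su; simpl in Su.
  assert (Dz : dom B (product_solution l w)) by (apply linear_domZ, linear_domB; auto).
  (* [B (A u - w) = l u] since [(BA - l) u = B w] *)
  assert (Bz : app B (product_solution l w) = u).
  { unfold product_solution. fold u.
    rewrite linear_appZ, linear_appB, <- Su, ksubKr by auto using linear_domB.
    apply kscaleVK; auto. }
  split.
  - split; [exact Dz|]. rewrite Bz. exact Du1.
  - unfold shift_app. simpl. rewrite Bz.
    unfold product_solution. fold u. rewrite kscaleKV by auto. apply ksubKr.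
Qed.

Lemma product_shift_inj l x1 x2 : l <> C0 -> in_resolvent (opmul B A) l ->
  dom (opmul A B) x1 -> dom (opmul A B) x2 ->
  shift_app (opmul A B) l x1 = shift_app (opmul A B) l x2 -> x1 = x2.
Proof.
  intros Hl Hr D1 D2 H.
  pose proof (opmul_linear K B A HB HA) as HBA. pose proof (opmul_linear K A B HA HB) as HAB.
  set (x := x1 +v -v x2).
  assert (Dx : dom (opmul A B) x) by (apply linear_domB; auto).
  destruct Dx as [Dx1 Dx2].
  assert (Hx : app A (app B x) = kscal l x).
  { apply ksubr0_eq. change (shift_app (opmul A B) l x = kz).
    unfold x. rewrite shift_appB, H, kaddrN; auto. }
  (* [B x] is in the kernel of [BA - l], hence zero, and then so is [x = l^{-1} A B x] *)
  assert (DBx : dom (opmul B A) (app B x)) by (split; auto; rewrite Hx; apply linear_domZ; auto).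
  assert (SBx : shift_app (opmul B A) l (app B x) = kz).
  { unfold shift_app; simpl. rewrite Hx, linear_appZ, kaddrN; auto. }
  assert (Bx0 : app B x = kz).
  { rewrite <- (resolv_unique K _ l Hr _ _ DBx SBx).
    apply resolv_unique; auto using linear_dom0, shift_app0. }
  apply ksubr0_eq. fold x.
  rewrite <- (kscaleVK K l x Hl), <- Hx, Bx0, linear_app0, kscaler0; auto.
Qed.

Lemma knorm_product_solution_le l w a : l <> C0 ->
  (forall y, knorm (app A (resolv (opmul B A) l y)) <= a * knorm y) ->
  knorm (product_solution l w) <= / Cabs l * (a * knorm (app B w) + knorm w).
Proof.
  intros Hl H. unfold product_solution. rewrite knorm_scal, CabsV by auto.
  pose proof (Cabs_gt0 l Hl). apply Rmult_le_compat_l; [left; apply Rinv_0_lt_compat; auto|].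
  eapply Rle_trans; [apply knorm_sub_le|]. specialize (H (app B w)). lra.
Qed.

Lemma knorm_product_solution_resolv_le l nu y a b N :
  l <> C0 -> 0 <= a ->
  (forall y, knorm (app A (resolv (opmul B A) l y)) <= a * knorm y) ->
  (forall y, knorm (app B (resolv (opmul A B) nu y)) <= b * knorm y) ->
  (forall y, knorm (resolv (opmul A B) nu y) <= N * knorm y) ->
  knorm (product_solution l (resolv (opmul A B) nu y)) <= / Cabs l * ((a * b + N) * knorm y).
Proof.
  intros Hl Ha HAr HBr HNr.
  eapply Rle_trans; [apply (knorm_product_solution_le l _ a); auto|].
  pose proof (Cabs_gt0 l Hl). apply Rmult_le_compat_l; [left; apply Rinv_0_lt_compat; auto|].
  specialize (HBr y). specialize (HNr y).
  assert (a * knorm (app B (resolv (opmul A B) nu y)) <= a * (b * knorm y))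
    by (apply Rmult_le_compat_l; auto).
  lra.
Qed.

Lemma product_resolvent_spec l nu y : l <> C0 -> in_resolvent (opmul B A) l ->
  in_resolvent (opmul A B) nu ->
  let w := resolv (opmul A B) nu y in
  let x := w +v kscal (Csub l nu) (product_solution l w) in
  dom (opmul A B) x /\ shift_app (opmul A B) l x = y.
Proof.
  intros Hl Hr Hn w x. pose proof (opmul_linear K A B HA HB) as HAB.
  assert (Dw : dom (opmul A B) w) by (apply resolv_dom; auto).
  destruct (product_solution_spec l w Hl Hr Dw) as [Dz Sz].
  split; [apply linear_domD, linear_domZ; auto|].
  unfold x. rewrite shift_appD, shift_appZ, Sz; auto using linear_domZ.
  rewrite <- shift_app_change. apply shift_resolv; auto.
Qed.

Lemma in_resolvent_product_swap l nu : l <> C0 ->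
  in_resolvent (opmul B A) l -> in_resolvent (opmul A B) nu ->
  op_bounded (fun y => app A (resolv (opmul B A) l y)) ->
  op_bounded (fun y => app B (resolv (opmul A B) nu y)) ->
  in_resolvent (opmul A B) l.
Proof.
  intros Hl Hr Hn (a & Ha & HAr) (b & _ & HBr).
  destruct (resolv_bounded K _ nu Hn) as (N & _ & HNr).
  set (w := resolv (opmul A B) nu).
  set (sol := fun y => w y +v kscal (Csub l nu) (product_solution l (w y))).
  assert (Hsol : forall y, dom (opmul A B) (sol y) /\ shift_app (opmul A B) l (sol y) = y)
    by (intros y; apply product_resolvent_spec; auto).
  assert (Huniq : forall x, dom (opmul A B) x -> x = sol (shift_app (opmul A B) l x)).
  { intros x Dx. apply (product_shift_inj l); auto; [apply Hsol | symmetry; apply Hsol]. }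
  split.
  - intros y. exists (sol y). split; [apply Hsol|].
    intros x' [D' S']. rewrite <- S'. symmetry. apply Huniq, D'.
  - exists (N + Cabs (Csub l nu) * (/ Cabs l * (a * b + N))).
    intros x Dx. rewrite (Huniq x Dx) at 1. set (y := shift_app (opmul A B) l x).
    eapply Rle_trans; [apply knorm_triangle|]. rewrite knorm_scal.
    pose proof (Cabs_ge0 (Csub l nu)).
    pose proof (knorm_product_solution_resolv_le l nu y a b N Hl Ha HAr HBr HNr) as Hz.
    assert (Cabs (Csub l nu) * knorm (product_solution l (w y))
              <= Cabs (Csub l nu) * (/ Cabs l * ((a * b + N) * knorm y)))
      by (apply Rmult_le_compat_l; auto).
    specialize (HNr y). fold (w y) in HNr. lra.
Qed.

End Products.

Lemma resnorm_product_le (K : KreinSpace) (A B : Op K) l m a b N :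
  linear_op A -> linear_op B -> l <> C0 ->
  in_resolvent (opmul A B) l -> in_resolvent (opmul B A) l -> in_resolvent (opmul B A) m ->
  0 <= a -> 0 <= b -> 0 <= N ->
  (forall y, knorm (app B (resolv (opmul A B) l y)) <= b * knorm y) ->
  (forall y, knorm (app A (resolv (opmul B A) m y)) <= a * knorm y) ->
  (forall y, knorm (resolv (opmul B A) m y) <= N * knorm y) ->
  resnorm (opmul B A) l <= N + Cabs (Csub l m) * (/ Cabs l * (b * a + N)).
Proof.
  intros HA HB Hl HABl HBAl HBAm Ha Hb HN HBr HAr HNr.
  pose proof (opmul_linear K B A HB HA) as HBA.
  pose proof (Cabs_ge0 (Csub l m)). pose proof (Cabs_gt0 l Hl).
  assert (0 < / Cabs l) by (apply Rinv_0_lt_compat; auto).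
  apply resnorm_le; auto.
  { assert (0 <= b * a) by (apply Rmult_le_pos; auto).
    assert (0 <= Cabs (Csub l m) * (/ Cabs l * (b * a + N))) by (apply Rmult_le_pos; nra).
    lra. }
  intros x Dx. set (y := shift_app (opmul B A) l x).
  rewrite <- (resolv_unique K _ l HBAl x y Dx eq_refl).
  rewrite (resolvent_identity K _ l m y HBA HBAl HBAm).
  set (w := resolv (opmul B A) m y).
  assert (Dw : dom (opmul B A) w) by (apply resolv_dom; auto).
  destruct (product_solution_spec K B A HA l w Hl HABl Dw) as [Dz Sz].
  rewrite (resolv_unique K _ l HBAl _ _ Dz Sz).
  eapply Rle_trans; [apply knorm_triangle|]. rewrite knorm_scal.
  pose proof (knorm_product_solution_resolv_le K B A l m y b a N Hl Hb HBr HAr HNr) as Hz.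
  fold w in Hz. specialize (HNr y). fold w in HNr.
  assert (Cabs (Csub l m) * knorm (product_solution K B A l w)
            <= Cabs (Csub l m) * (/ Cabs l * ((b * a + N) * knorm y)))
    by (apply Rmult_le_compat_l; auto).
  nra.
Qed.

Lemma resolv_conv (K : KreinSpace) (S : Op K) l (u : nat -> K) x :
  linear_op S -> in_resolvent S l ->
  conv_wrt kdist u x -> conv_wrt kdist (fun n => resolv S l (u n)) (resolv S l x).
Proof.
  intros HS Hl Hu eps He.
  destruct (resolv_bounded K S l Hl) as (N & HN & HNr).
  destruct (Hu (eps / (N + 1))) as [n0 Hn0]; [apply Rdiv_lt_0_compat; lra|].
  exists n0. intros n Hn. specialize (Hn0 n Hn). unfold kdist in *.
  rewrite <- resolvB by auto.
  eapply Rle_lt_trans; [apply HNr|].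
  pose proof (knorm_ge0 K (u n +v -v x)).
  apply (Rmult_lt_compat_l (N + 1)) in Hn0; [|lra].
  replace ((N + 1) * (eps / (N + 1))) with eps in Hn0 by (field; lra). nra.
Qed.

Lemma closed_comp_resolv_bounded (K : KreinSpace) (S G : Op K) l :
  linear_op S -> closed_op S -> linear_op G -> in_resolvent G l ->
  (forall y, dom S (resolv G l y)) -> op_bounded (fun y => app S (resolv G l y)).
Proof.
  intros HS HSc HG Hl Hd.
  destruct (closed_graph K (fun y => app S (resolv G l y))) as [M HM].
  - intros x y. rewrite resolvD by auto. apply linear_appD; auto.
  - intros t x. rewrite resolvZ by auto. apply linear_appZ; auto.
  - intros u x y Hu Hy.
    apply (HSc (fun n => resolv G l (u n))); auto using resolv_conv.
  - exists (Rabs M). split; [apply Rabs_pos|]. intros y. specialize (HM y).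
    pose proof (knorm_ge0 K y). pose proof (Rle_abs M). nra.
Qed.

Lemma in_resolvent_product_swap_closed (K : KreinSpace) (A B : Op K) l :
  linear_op A -> linear_op B -> closed_op A -> closed_op B ->
  (exists nu, in_resolvent (opmul A B) nu) ->
  l <> C0 -> in_resolvent (opmul B A) l -> in_resolvent (opmul A B) l.
Proof.
  intros HA HB HAc HBc [nu Hnu] Hl Hr.
  apply (in_resolvent_product_swap K A B HA HB l nu); auto;
    apply closed_comp_resolv_bounded; auto using opmul_linear.
  - intros y. exact (proj1 (resolv_dom K _ l Hr y)).
  - intros y. exact (proj1 (resolv_dom K _ nu Hnu y)).
Qed.

Lemma knorm_comp_resolv_le_Rmax (K : KreinSpace) (S : Op K) l nu (G : K -> K) c :
  linear_op S -> in_resolvent S l -> in_resolvent S nu -> 0 <= c ->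
  (forall y, knorm (G (resolv S nu y)) <= c * knorm y) ->
  forall y, knorm (G (resolv S l y))
              <= c * Rmax 1 (resnorm S l) * (1 + Cabs nu) * (2 + Cabs l) * knorm y.
Proof.
  intros HS Hl Hnu Hc HG y.
  set (N := Rmax 1 (resnorm S l)). assert (HN : 1 <= N) by apply Rmax_l.
  eapply Rle_trans;
    [apply (knorm_comp_resolv_le K S l nu G c N); auto; apply knorm_resolv_le_Rmax; auto|].
  apply Rmult_le_compat_r; [apply knorm_ge0|].
  rewrite !Rmult_assoc. apply Rmult_le_compat_l; auto.
  pose proof (Cabs_sub_le l nu). pose proof (Cabs_ge0 l). pose proof (Cabs_ge0 nu).
  assert (Cabs (Csub l nu) * N <= (Cabs l + Cabs nu) * N) by (apply Rmult_le_compat_r; lra).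
  assert (0 <= N * (Cabs nu * Cabs l)) by (apply Rmult_le_pos; [lra | apply Rmult_le_pos; auto]).
  nra.
Qed.

Lemma resolvent_bound_arith (L Mm D N1 N2 Q : R) :
  0 < L -> 0 <= Mm -> 0 <= D -> 1 <= N1 -> 1 <= N2 -> 0 <= Q -> L <= Mm + D ->
  N2 + D * (/ L * (Q * N1 * N2 * (2 + L) * (2 + Mm) + N2))
    <= (2 + Q) * N1 * N2 / L * (Mm + D * (2 + L) * (2 + Mm)).
Proof.
  intros. set (P := (2 + L) * (2 + Mm)). set (S := Mm + D * P).
  assert (HP : 4 <= P) by (unfold P; nra).
  assert (HS : L <= S) by (unfold S; nra).
  replace ((2 + Q) * N1 * N2 / L * (Mm + D * (2 + L) * (2 + Mm)))
    with (/ L * ((2 + Q) * N1 * N2 * S)) by (unfold S, P; field; lra).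
  replace (N2 + D * (/ L * (Q * N1 * N2 * (2 + L) * (2 + Mm) + N2)))
    with (/ L * (N2 * L + D * (Q * N1 * N2 * P + N2))) by (unfold P; field; lra).
  apply Rmult_le_compat_l; [left; apply Rinv_0_lt_compat; auto|].
  assert (HN : N2 * S <= N1 * N2 * S).
  { assert (0 <= (N1 - 1) * (N2 * S)) by (apply Rmult_le_pos; [|apply Rmult_le_pos]; lra).
    nra. }
  assert (T1 : N2 * L <= N1 * N2 * S).
  { assert (N2 * L <= N2 * S) by (apply Rmult_le_compat_l; lra). lra. }
  assert (T2 : D * N2 <= N1 * N2 * S).
  { assert (D <= S) by (unfold S; nra).
    assert (D * N2 <= S * N2) by (apply Rmult_le_compat_r; lra). lra. }
  assert (T3 : D * (Q * N1 * N2 * P) <= Q * N1 * N2 * S).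
  { assert (D * P <= S) by (unfold S; lra).
    assert (0 <= Q * N1 * N2) by (repeat apply Rmult_le_pos; lra). nra. }
  nra.
Qed.

Lemma resnorm_product_bound (K : KreinSpace) (A B : Op K) nu0 nu1 :
  linear_op A -> linear_op B -> closed_op A -> closed_op B ->
  in_resolvent (opmul B A) nu0 -> in_resolvent (opmul A B) nu1 ->
  exists C, 0 < C /\
    forall l m, in_resolvent (opmul B A) l -> in_resolvent (opmul B A) m -> l <> C0 ->
      resnorm (opmul B A) l <=
        C * Rmax 1 (resnorm (opmul A B) l) * Rmax 1 (resnorm (opmul B A) m) / Cabs l
          * (Cabs m + Cabs (Csub l m) * (2 + Cabs l) * (2 + Cabs m)).
Proof.
  intros HA HB HAc HBc H0 H1.
  pose proof (opmul_linear K B A HB HA) as HBA. pose proof (opmul_linear K A B HA HB) as HAB.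
  destruct (closed_comp_resolv_bounded K A (opmul B A) nu0) as (c0 & Hc0 & HAr); auto.
  { intros y. exact (proj1 (resolv_dom K _ _ H0 y)). }
  destruct (closed_comp_resolv_bounded K B (opmul A B) nu1) as (c1 & Hc1 & HBr); auto.
  { intros y. exact (proj1 (resolv_dom K _ _ H1 y)). }
  pose proof (Cabs_ge0 nu0). pose proof (Cabs_ge0 nu1).
  set (Q := c0 * c1 * (1 + Cabs nu0) * (1 + Cabs nu1)).
  assert (HQ : 0 <= Q) by (unfold Q; repeat apply Rmult_le_pos; lra).
  exists (2 + Q). split; [lra|]. intros l m Hl Hm Hl0.
  assert (HABl : in_resolvent (opmul A B) l)
    by (apply (in_resolvent_product_swap_closed K A B); eauto).
  set (M1 := Rmax 1 (resnorm (opmul A B) l)). set (M2 := Rmax 1 (resnorm (opmul B A) m)).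
  assert (HM1 : 1 <= M1) by apply Rmax_l. assert (HM2 : 1 <= M2) by apply Rmax_l.
  pose proof (Cabs_ge0 l). pose proof (Cabs_ge0 m).
  eapply Rle_trans.
  { apply (resnorm_product_le K A B l m (c0 * M2 * (1 + Cabs nu0) * (2 + Cabs m))
             (c1 * M1 * (1 + Cabs nu1) * (2 + Cabs l)) M2);
      auto; try (repeat apply Rmult_le_pos; lra).
    - apply (knorm_comp_resolv_le_Rmax K _ l nu1 (app B) c1); auto.
    - apply (knorm_comp_resolv_le_Rmax K _ m nu0 (app A) c0); auto.
    - apply knorm_resolv_le_Rmax; auto. }
  replace (c1 * M1 * (1 + Cabs nu1) * (2 + Cabs l) * (c0 * M2 * (1 + Cabs nu0) * (2 + Cabs m)))
    with (Q * M1 * M2 * (2 + Cabs l) * (2 + Cabs m)) by (unfold Q; ring).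
  apply resolvent_bound_arith; auto using Cabs_gt0, Cabs_ge0.
  replace l with (Cadd m (Csub l m)) at 1 by (destruct l, m; ceq).
  apply Cabs_triangle.
Qed.

Theorem theorem2p2 (K : KreinSpace) (T : Op K) :
  linear_op T -> closed_op T -> densely_defined T ->
  (exists z, in_resolvent (opmul (kadj T) T) z) ->
  (exists z, in_resolvent (opmul T (kadj T)) z) ->
  (forall z, z <> C0 ->
     (in_spectrum (opmul (kadj T) T) z <-> in_spectrum (opmul T (kadj T)) z)) /\
  (exists C, 0 < C /\
     forall l m : Cx,
       in_resolvent (opmul (kadj T) T) l -> in_resolvent (opmul (kadj T) T) m ->
       l <> C0 ->
       resnorm (opmul (kadj T) T) l <=
         C * Rmax 1 (resnorm (opmul T (kadj T)) l) * Rmax 1 (resnorm (opmul (kadj T) T) m)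
           / Cabs l
           * (Cabs m + Cabs (Csub l m) * (2 + Cabs l) * (2 + Cabs m))).
Proof.
  intros HT HTc HTd [nu0 H0] [nu1 H1].
  pose proof (adjoint_linear K T HTd) as HTs. pose proof (adjoint_closed K T HTd) as HTsc.
  split.
  - intros z Hz. unfold in_spectrum. split; intros Hn Hr; apply Hn.
    + apply (in_resolvent_product_swap_closed K (kadj T) T); eauto.
    + apply (in_resolvent_product_swap_closed K T (kadj T)); eauto.
  - apply (resnorm_product_bound K T (kadj T) nu0 nu1); auto.
Qed.
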